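(* Let $A=(a_{ij})\in\mathcal{B}^{m,n}$ and let $k$ be a field. Let $k[A]=k[x_{ij} : a_{ij}=1]$ and let $A[x]$ be the $m\times n$ matrix over $k[A]$ with $A[x]_{ij}=x_{ij}$ if $a_{ij}=1$ and $A[x]_{ij}=0$ if $a_{ij}=0$. Let $I_2(A)\subseteq k[A]$ be the ideal generated by all $2\times 2$ minors of $A[x]$. Then for entries $a_{ij}=a_{k\ell}=1$, the pair $\{a_{ij},a_{k\ell}\}$ is an isolated pair if and only if $x_{ij}x_{k\ell}\in I_2(A)$.
   Context: $\mathcal{B}^{m,n}$ denotes $m\times n$ matrices with entries in the Boolean semiring $\{0,1\}$ with $\vee$ (or), $\wedge$ (and). A pair of entries $\{a_{ij},a_{k\ell}\}$ of $A$ is called isolated if $a_{ij}=a_{k\ell}=1$ and $a_{i\ell}\wedge a_{kj}=0$. *)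

From HB Require Import structures.
From mathcomp Require Import all_boot all_algebra.
From mathcomp Require Import mpoly.
Set Implicit Arguments. Unset Strict Implicit. Unset Printing Implicit Defensive.
Import GRing.Theory.
Local Open Scope ring_scope.

(* Boolean matrices B^{m,n} are 'M[bool]_(m,n) (true = 1, false = 0). *)

Definition supp m n (A : 'M[bool]_(m, n)) :=
  {p : 'I_m * 'I_n | A p.1 p.2}.

Definition nvars m n (A : 'M[bool]_(m, n)) := #|{: supp A}|.

(* k[A] = k[x_ij : a_ij = 1], realised as a multivariate polynomial ring whose
   variables are indexed by enumerating supp A. *)
Definition kA (k : fieldType) m n (A : 'M[bool]_(m, n)) :=
  {mpoly k[nvars A]}.

(* The variable x_ij (meaningful when a_ij = 1; 0 otherwise). *)
Definition xvar (k : fieldType) m n (A : 'M[bool]_(m, n)) (i : 'I_m) (j : 'I_n)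
  : {mpoly k[nvars A]} :=
  match @insub _ (fun p : 'I_m * 'I_n => A p.1 p.2) (supp A) (i, j) with
  | Some p => 'X_(enum_rank p)
  | None => 0
  end.

Definition Ax (k : fieldType) m n (A : 'M[bool]_(m, n))
  : 'M[{mpoly k[nvars A]}]_(m, n) :=
  \matrix_(i, j) (if A i j then xvar k A i j else 0).

Definition minor2 (k : fieldType) m n (A : 'M[bool]_(m, n))
  (i1 i2 : 'I_m) (j1 j2 : 'I_n) : {mpoly k[nvars A]} :=
  Ax k A i1 j1 * Ax k A i2 j2 - Ax k A i1 j2 * Ax k A i2 j1.

(* Membership in I_2(A): the ideal of k[A] generated by all 2x2 minors
   (rows i1 < i2, columns j1 < j2), i.e. p is a k[A]-linear combination
   of these minors. *)
Definition in_I2 (k : fieldType) m n (A : 'M[bool]_(m, n))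
  (p : {mpoly k[nvars A]}) : Prop :=
  exists c : 'I_m -> 'I_m -> 'I_n -> 'I_n -> {mpoly k[nvars A]},
    p = \sum_(i1 : 'I_m) \sum_(i2 : 'I_m | (i1 < i2)%N)
          \sum_(j1 : 'I_n) \sum_(j2 : 'I_n | (j1 < j2)%N)
            c i1 i2 j1 j2 * minor2 k A i1 i2 j1 j2.

Definition isolated m n (A : 'M[bool]_(m, n)) (i : 'I_m) (j : 'I_n)
  (k : 'I_m) (l : 'I_n) : Prop :=
  A i j /\ A k l /\ (A i l && A k j) = false.

(* If the pair is isolated, one product of the 2x2 minor of A[x] on its rows
   and columns vanishes, so that minor is ±x_ij x_kl.  Conversely, if a_il and
   a_kj are both 1, evaluate at the indicator of the rectangle {i,k} x {j,l}:
   A[x] becomes a rank-one 0/1 matrix, so every 2x2 minor, and hence all of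
   I_2(A), vanishes there, while x_ij x_kl evaluates to 1. *)

From HB Require Import structures.
From mathcomp Require Import all_boot all_algebra.
From mathcomp Require Import mpoly.
Local Open Scope ring_scope.
Import GRing.Theory.

Section TwoMinorIdeal.
Context {k : fieldType} {m n : nat} {A : 'M[bool]_(m, n)}.

Local Notation minor2 := (minor2 k A).
Local Notation in_I2 := (@in_I2 k m n A).

Lemma Ax_supp a b : A a b -> Ax k A a b = xvar k A a b.
Proof. by move=> Aab; rewrite mxE Aab. Qed.

Lemma Ax_out a b : ~~ A a b -> Ax k A a b = 0.
Proof. by move=> /negbTE nAab; rewrite mxE nAab. Qed.

Lemma minor2_swap_rows a b c d : minor2 b a c d = - minor2 a b c d.
Proof. by rewrite /minor2 opprB [Ax _ _ b c * _]mulrC [Ax _ _ b d * _]mulrC. Qed.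

Lemma minor2_swap_cols a b c d : minor2 a b d c = - minor2 a b c d.
Proof. by rewrite /minor2 opprB [Ax _ _ a c * _]mulrC [Ax _ _ a d * _]mulrC. Qed.

Lemma in_I2_mull s p : in_I2 p -> in_I2 (s * p).
Proof.
move=> [c ->]; exists (fun a b c' d => s * c a b c' d).
rewrite mulr_sumr; apply: eq_bigr => a _; rewrite mulr_sumr; apply: eq_bigr => b _.
rewrite mulr_sumr; apply: eq_bigr => c' _; rewrite mulr_sumr; apply: eq_bigr => d _.
by rewrite mulrA.
Qed.

Lemma in_I2N p : in_I2 p -> in_I2 (- p).
Proof. by rewrite -mulN1r; apply: in_I2_mull. Qed.

Lemma in_I2_minor2_sorted (a b : 'I_m) (c d : 'I_n) :
  (a < b)%N -> (c < d)%N -> in_I2 (minor2 a b c d).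
Proof.
move=> ab cd.
exists (fun a' b' c' d' => if [&& a' == a, b' == b, c' == c & d' == d] then 1 else 0).
rewrite (big_only1 a) //; last first.
  move=> a' /negbTE na' _; apply: big1 => b' _; apply: big1 => c' _.
  by apply: big1 => d' _; rewrite na' mul0r.
rewrite (big_only1 b) //; last first.
  move=> b' /negbTE nb' _; apply: big1 => c' _.
  by apply: big1 => d' _; rewrite eqxx nb' mul0r.
rewrite (big_only1 c) //; last first.
  by move=> c' /negbTE nc' _; apply: big1 => d' _; rewrite !eqxx nc' mul0r.
rewrite (big_only1 d) //; last by move=> d' /negbTE nd' _; rewrite !eqxx nd' mul0r.
by rewrite !eqxx mul1r.
Qed.

Lemma in_I2_minor2 a b c d : a != b -> c != d -> in_I2 (minor2 a b c d).
Proof.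
wlog ab : a b / (a < b)%N => [wlog_ab nab|_].
  case: (ltngtP a b) => [ab|ba|/val_inj eqab]; last by rewrite eqab eqxx in nab.
  - exact: wlog_ab.
  - by rewrite minor2_swap_rows => ncd; apply/in_I2N/wlog_ab; rewrite // eq_sym.
case: (ltngtP c d) => [cd|dc|/val_inj ->]; last by rewrite eqxx.
- by move=> _; apply: in_I2_minor2_sorted.
- by move=> _; rewrite minor2_swap_cols; apply/in_I2N/in_I2_minor2_sorted.
Qed.

Lemma meval_in_I2 {v : 'I_(nvars A) -> k} {p} :
  (forall a b c d, meval v (minor2 a b c d) = 0) -> in_I2 p -> meval v p = 0.
Proof.
move=> minor0 [c ->].
rewrite raddf_sum big1 // => a _; rewrite raddf_sum big1 // => b _.
rewrite raddf_sum big1 // => c' _; rewrite raddf_sum big1 // => d _.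
by rewrite /= mevalM minor0 mulr0.
Qed.

Definition rect_point (R : pred 'I_m) (C : pred 'I_n) : 'I_(nvars A) -> k :=
  fun q => let p := val (enum_val q) in (R p.1 && C p.2)%:R.

Section Rectangle.
Context {R : pred 'I_m} {C : pred 'I_n}.

Lemma meval_Ax_rect a b :
  meval (rect_point R C) (Ax k A a b) = (A a b && R a && C b)%:R.
Proof.
rewrite mxE; case: ifP => Aab; last by rewrite meval0.
rewrite /xvar; case: insubP => [p _ val_p|]; last by rewrite /= Aab.
by rewrite mevalXU /rect_point enum_rankK val_p.
Qed.

Lemma meval_xvar_rect a b :
  A a b -> R a -> C b -> meval (rect_point R C) (xvar k A a b) = 1.
Proof. by move=> Aab Ra Cb; rewrite -Ax_supp // meval_Ax_rect Aab Ra Cb. Qed.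

Hypothesis rect_in_A : forall a b, R a -> C b -> A a b.

Lemma meval_Ax_rect_rank1 a b :
  meval (rect_point R C) (Ax k A a b) = (R a)%:R * (C b)%:R.
Proof.
rewrite meval_Ax_rect.
by case Ra: (R a); case Cb: (C b); rewrite ?andbF ?mulr0 ?mul0r // rect_in_A ?mulr1.
Qed.

Lemma meval_minor2_rect a b c d : meval (rect_point R C) (minor2 a b c d) = 0.
Proof.
rewrite /minor2 mevalB !mevalM !meval_Ax_rect_rank1.
by rewrite mulrACA [(C c)%:R * _]mulrC -mulrACA subrr.
Qed.

End Rectangle.

Section Pair.
Context {i i' : 'I_m} {j j' : 'I_n}.

Lemma isolated_neq : isolated A i j i' j' -> i != i' /\ j != j'.
Proof.
move=> [Aij [Ai'j' nAcross]].
by split; apply/eqP => eq_ind; move: nAcross; rewrite eq_ind Ai'j' -eq_ind Aij.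
Qed.

Lemma isolated_minor2 :
  isolated A i j i' j' -> minor2 i i' j j' = xvar k A i j * xvar k A i' j'.
Proof.
move=> [Aij [Ai'j' nAcross]].
have cross0 : Ax k A i j' * Ax k A i' j = 0.
  by move/negbT/nandP: nAcross => [/Ax_out -> | /Ax_out ->]; rewrite ?mul0r ?mulr0.
by rewrite /minor2 cross0 subr0 !Ax_supp.
Qed.

End Pair.

End TwoMinorIdeal.

Theorem lemma4p12 (k : fieldType) (m n : nat) (A : 'M[bool]_(m, n))
  (i : 'I_m) (j : 'I_n) (i' : 'I_m) (j' : 'I_n) :
  A i j -> A i' j' ->
  (isolated A i j i' j' <-> @in_I2 k m n A (xvar k A i j * xvar k A i' j')).
Proof.
move=> Aij Ai'j'; split=> [iso | I2x].
  case/isolated_neq: (iso) => ni nj.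
  by rewrite -isolated_minor2 //; apply: in_I2_minor2.
do 2!split=> //; apply/negbTE/negP => /andP[Aij' Ai'j].
pose R := [pred a | (a == i) || (a == i')].
pose C := [pred b | (b == j) || (b == j')].
have rect_in_A a b : R a -> C b -> A a b.
  by move=> /orP[] /eqP-> /orP[] /eqP->.
have := meval_in_I2 (meval_minor2_rect rect_in_A) I2x.
rewrite mevalM !meval_xvar_rect ?inE ?eqxx ?orbT // mulr1.
by move/eqP; rewrite oner_eq0.
Qed.
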